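(* Let $G$ be a finite simple connected graph, let $S\subseteq V(G)$ with $|S|\geq 2$, and let $T_1,\dots,T_k$ ($k\geq 2$) be $S$-Steiner trees in $G$. Then $T_1,\dots,T_k$ are completely independent $S$-Steiner trees if and only if they are pairwise edge-disjoint and, for every vertex $w\in V(G)$, there is at most one index $i$ with $d_{T_i}(w)>1$.
   Context: For $S\subseteq V(G)$ with $|S|\ge 2$, an $S$-Steiner tree of $G$ is a subtree $T$ of $G$ with $S\subseteq V(T)$ all of whose leaves belong to $S$. $S$-Steiner trees $T_1,\dots,T_k$ are called completely independent $S$-Steiner trees (CISSTs) if for all $1\le p<q\le k$: $E(T_p)\cap E(T_q)=\emptyset$, $V(T_p)\cap V(T_q)=S$, and for any two vertices $x_1,x_2\in S$ the $(x_1,x_2)$-paths in $T_p$ and in $T_q$ are internally disjoint. $d_{T}(w)$ denotes the degree of $w$ in $T$ (taken to be $0$ if $w\notin V(T)$). *)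

(* Graphs: G = (V, e) with V : finType, e : rel V
   symmetric and irreflexive (finite simple graph).  A subgraph is a pair
   (vertex set, edge set) where edges are 2-element vertex sets. *)
From mathcomp Require Import all_boot.
Set Implicit Arguments. Unset Strict Implicit. Unset Printing Implicit Defensive.

Section Steiner.
Variables (V : finType) (e : rel V).

Definition simple_graph : Prop := symmetric e /\ irreflexive e.

Definition graph_connected : Prop := forall x y : V, connect e x y.

Definition subgraph := ({set V} * {set {set V}})%type.

Definition sV (T : subgraph) : {set V} := T.1.
Definition sE (T : subgraph) : {set {set V}} := T.2.

Definition wf_subgraph (T : subgraph) : Prop :=
  forall f, f \in sE T ->
    exists x y, [/\ x \in sV T, y \in sV T, e x y & f = [set x; y]].

Definition tadj (T : subgraph) : rel V := fun a b => [set a; b] \in sE T.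

Definition deg (T : subgraph) (w : V) : nat := #|[set f in sE T | w \in f]|.

Definition is_tpath (T : subgraph) (x y : V) (p : seq V) : Prop :=
  [/\ x \in sV T, all (fun v => v \in sV T) p, path (tadj T) x p,
      last x p = y & uniq (x :: p)].

Definition internal (x y : V) (p : seq V) : seq V :=
  [seq v <- x :: p | (v != x) && (v != y)].

Definition has_cycle (T : subgraph) : Prop :=
  exists x p, [/\ x \in sV T, all (fun v => v \in sV T) p, path (tadj T) x p,
      uniq (x :: p) & 2 <= size p] /\ tadj T (last x p) x.

Definition is_tree (T : subgraph) : Prop :=
  [/\ wf_subgraph T,
      forall x y, x \in sV T -> y \in sV T -> exists p, is_tpath T x y p
    & ~ has_cycle T].

Definition steiner_tree (S : {set V}) (T : subgraph) : Prop :=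
  [/\ is_tree T, S \subset sV T &
      forall w, w \in sV T -> deg T w = 1 -> w \in S].

Definition CISST (S : {set V}) (k : nat) (Ts : 'I_k -> subgraph) : Prop :=
  forall p q : 'I_k, p < q ->
    [/\ sE (Ts p) :&: sE (Ts q) = set0,
        sV (Ts p) :&: sV (Ts q) = S &
        forall x1 x2, x1 \in S -> x2 \in S ->
          forall P Q, is_tpath (Ts p) x1 x2 P -> is_tpath (Ts q) x1 x2 Q ->
            forall v, v \in internal x1 x2 P -> v \notin internal x1 x2 Q].

End Steiner.

From mathcomp Require Import all_boot.
Set Implicit Arguments. Unset Strict Implicit. Unset Printing Implicit Defensive.

(* Internal vertices of a tree path have degree at least 2, and a common
   vertex of two Steiner trees outside S has degree at least 2 in both (it is
   not a leaf, and it is not isolated because |S| >= 2); this gives the "if"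
   direction.  Conversely, if w has degree > 1 in two trees T_p and T_q, then
   following two edges at w to leaves yields, in each tree, two vertices of
   S \ w separated by w.  Connectivity in T - w is an equivalence relation, so
   the two separated pairs can be merged into a single pair x, x' separated by
   w in both trees; w is then an internal vertex of both (x, x')-paths. *)

Lemma path_targets_all (T : Type) (r : rel T) (P : pred T) x p :
  (forall a b, r a b -> P b) -> path r x p -> all P p.
Proof. by move=> rP; elim: p x => //= y p IH x /andP [/rP -> /IH]. Qed.

Lemma exists_maximal_path (T : finType) (r : rel T) x p :
  path r x p -> uniq (x :: p) ->
  exists q, [/\ path r x (p ++ q), uniq (x :: p ++ q)
              & forall u, r (last x (p ++ q)) u -> u \in x :: p ++ q].
Proof.
have [n] := ubnP (#|T| - size p); elim: n p => // n IH p bound pth up.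
case: (pickP [pred u | r (last x p) u & u \notin x :: p]) => [u /andP [ru fresh]|none].
- have up' : uniq (x :: rcons p u) by rewrite -rcons_cons rcons_uniq fresh up.
  have := max_card (mem (x :: rcons p u)); rewrite (card_uniqP up') /= size_rcons => fit.
  have shorter : #|T| - size (rcons p u) < n.
    by rewrite size_rcons subnS -ltnS prednK // subn_gt0 ltnW.
  have [|q [pq uq maxq]] := IH _ shorter _ up'; first by rewrite rcons_path pth ru.
  by exists (u :: q); rewrite -cat_rcons.
- exists [::]; rewrite cats0; split=> // u ru.
  by move: (none u); rewrite /= ru => /negbFE.
Qed.

Lemma common_separated_pair (X : Type) (D : {pred X}) (r1 r2 : rel X) :
  symmetric r1 -> transitive r1 -> symmetric r2 -> transitive r2 ->
  forall y1 y2 z1 z2, y1 \in D -> y2 \in D -> z1 \in D -> z2 \in D ->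
  ~~ r1 y1 y2 -> ~~ r2 z1 z2 ->
  exists x x', [/\ x \in D, x' \in D, ~~ r1 x x' & ~~ r2 x x'].
Proof.
move=> sym1 tr1 sym2 tr2 y1 y2 z1 z2 Dy1 Dy2 Dz1 Dz2 ny nz.
have [z Dz nyz] : exists2 z, z \in D & ~~ r2 y1 z.
  case: (boolP (r2 y1 z1)) => [r2y1z1|]; last by exists z1.
  exists z2 => //; apply: contra nz => r2y1z2.
  by apply: tr2 r2y1z2; rewrite sym2.
case: (boolP (r1 y1 z)) => [r1y1z|]; last by exists y1, z.
case: (boolP (r2 y1 y2)) => [r2y1y2|]; last by exists y1, y2.
exists y2, z; split=> //.
- by apply: contra ny => r1y2z; apply: tr1 r1y1z _; rewrite sym1.
- by apply: contra nyz; apply: tr2.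
Qed.

Section Subgraph.
Variables (V : finType) (e : rel V) (T : subgraph V).
Hypotheses (irr_e : irreflexive e) (wfT : wf_subgraph e T).

Lemma tadj_sym : symmetric (tadj T).
Proof. by move=> x y; rewrite /tadj setUC. Qed.

Lemma tadj_endpoints x y : tadj T x y -> [/\ x \in sV T, y \in sV T & x != y].
Proof.
move=> /wfT [a [b [aT bT eab Exy]]].
have inT z : z \in [set x; y] -> z \in sV T by rewrite Exy !inE => /orP [] /eqP ->.
split; [exact/inT/set21 | exact/inT/set22 | apply/eqP => Exy'].
move: Exy; rewrite Exy' setUid => Eab.
have: b \in [set y] by rewrite Eab set22.
have: a \in [set y] by rewrite Eab set21.
by rewrite !inE => /eqP Ea /eqP Eb; rewrite Ea Eb irr_e in eab.
Qed.

Lemma edge_at w f : f \in sE T -> w \in f -> exists2 u, tadj T w u & f = [set w; u].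
Proof.
move=> fT; have [a [b [_ _ _ Ef]]] := wfT fT; subst f.
rewrite !inE => /orP [] /eqP ->; first by exists b.
by exists a; [rewrite tadj_sym | rewrite setUC].
Qed.

Lemma deg_gt0P w : reflect (exists u, tadj T w u) (0 < deg T w).
Proof.
apply: (iffP card_gt0P) => [[f]|[u wu]].
- by rewrite inE => /andP [fT /(edge_at fT)] [u wu _]; exists u.
- by exists [set w; u]; rewrite inE set21 andbT.
Qed.

Lemma deg_gt1P w :
  reflect (exists a b, [/\ tadj T w a, tadj T w b & a != b]) (1 < deg T w).
Proof.
apply: (iffP card_gt1P) => [[f [g [+ + fg]]]|[a [b [wa wb ab]]]].
- rewrite !inE => /andP [fT /(edge_at fT) [a wa Ef]] /andP [gT /(edge_at gT) [b wb Eg]].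
  by exists a, b; split=> //; apply: contraNneq fg => Eab; rewrite Ef Eg Eab.
- exists [set w; a], [set w; b]; rewrite !inE !eqxx !andbT; split=> //.
  apply: contra ab => /eqP Eab; have: a \in [set w; b] by rewrite -Eab set22.
  by case: (tadj_endpoints wa) => _ _ /negPf wa'; rewrite !inE eq_sym wa'.
Qed.

Lemma deg_gt0_sV w : 0 < deg T w -> w \in sV T.
Proof. by case/deg_gt0P => u /tadj_endpoints []. Qed.

Lemma internal_deg_gt1 x y P v :
  is_tpath T x y P -> v \in internal x y P -> 1 < deg T v.
Proof.
move=> [_ _ pth Ey uxP]; rewrite mem_filter in_cons => /andP [/andP [vx vy]].
rewrite (negPf vx) /= => vP; case/splitPr: vP pth Ey uxP => s1 [|u s2].
  by rewrite last_cat => _ /= Ev; rewrite Ev eqxx in vy.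
move=> pth _; rewrite -cat_cons cat_uniq => /and3P [_ fresh _].
move: pth; rewrite cat_path => /andP [_ /= /and3P [pv vu _]].
apply/deg_gt1P; exists (last x s1), u; rewrite tadj_sym; split=> //.
by apply: contra fresh => /eqP <-; rewrite /= mem_last !orbT.
Qed.

Definition avoid_adj (w : V) : rel V := [rel a b | [&& a != w, b != w & tadj T a b]].

Lemma avoid_adj_sym w : symmetric (avoid_adj w).
Proof. by move=> a b; rewrite /avoid_adj /= tadj_sym andbCA. Qed.

Lemma avoid_path_notin w a q : path (avoid_adj w) a q -> w \notin q.
Proof.
by rewrite -has_pred1 -all_predC; apply: path_targets_all => b c /and3P [].
Qed.

Lemma avoid_path w x p :
  w \notin x :: p -> path (tadj T) x p -> path (avoid_adj w) x p.
Proof.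
rewrite -has_pred1 -all_predC => wxp; apply: (sub_in_path (P := predC1 w)) wxp.
by move=> a b; rewrite !inE /avoid_adj /= => -> ->.
Qed.

Lemma internal_of_separated x y P w :
  is_tpath T x y P -> w != x -> w != y -> ~~ connect (avoid_adj w) x y ->
  w \in internal x y P.
Proof.
move=> [_ _ pth Ey _] wx wy; apply: contraR => wP; apply/connectP; exists P => //.
by apply: avoid_path pth; move: wP; rewrite mem_filter wx wy.
Qed.

Lemma acyclic_closed_path u q :
  ~ has_cycle T -> path (tadj T) u q -> uniq (u :: q) -> tadj T (last u q) u ->
  size q <= 1.
Proof.
move=> acyc pth uq closing; rewrite leqNgt; apply/negP => long; apply: acyc.
have [_ uT _] := tadj_endpoints closing.
exists u, q; split=> //; split=> //.
by apply: path_targets_all pth => a b /tadj_endpoints [].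
Qed.

Lemma maximal_path_last_deg1 x p :
  ~ has_cycle T -> path (tadj T) x p -> uniq (x :: p) ->
  (forall u, tadj T (last x p) u -> u \in x :: p) -> 0 < size p ->
  deg T (last x p) = 1.
Proof.
move=> acyc; case/lastP: p => [//|r z] pth uq; rewrite last_rcons => maxz _.
set y := last x r.
have yz : tadj T y z by move: pth; rewrite rcons_path => /andP [].
have only_y u : tadj T z u -> u = y.
  move=> zu; have [_ _ /negPf zu'] := tadj_endpoints zu.
  have ur : u \in x :: r.
    by move: (maxz u zu); rewrite -rcons_cons mem_rcons in_cons eq_sym zu'.
  have [s1 [s2 Exr]] : exists s1 s2, x :: r = s1 ++ u :: s2.
    by case/splitPr: ur => s1 s2; exists s1, s2.
  have Ep : x :: rcons r z = s1 ++ u :: rcons s2 z by rewrite -rcons_cons Exr rcons_cat.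
  have su : path (tadj T) u (rcons s2 z).
    by move: pth; rewrite -/(sorted _ (x :: _)) Ep => /cat_sorted2 [].
  have uu : uniq (u :: rcons s2 z) by move: uq; rewrite Ep cat_uniq => /and3P [].
  have : size (rcons s2 z) <= 1.
    by apply: acyclic_closed_path acyc su uu _; rewrite last_rcons.
  rewrite size_rcons ltnS leqn0 size_eq0 => /eqP s2nil; rewrite s2nil in Exr.
  by rewrite /y -[last x r]/(last x (x :: r)) Exr last_cat.
apply/eqP; rewrite eqn_leq; apply/andP; split.
- rewrite leqNgt; apply/deg_gt1P => -[a [b [za zb]]].
  by rewrite (only_y a za) (only_y b zb) eqxx.
- by apply/deg_gt0P; exists y; rewrite tadj_sym.
Qed.

End Subgraph.

Section SteinerTree.
Variables (V : finType) (e : rel V) (S : {set V}) (T : subgraph V).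
Hypotheses (irr_e : irreflexive e) (stT : steiner_tree e S T).

Lemma steiner_leaf_beyond w a :
  tadj T w a -> exists2 z, z \in S :\ w & connect (avoid_adj T w) a z.
Proof.
case: stT => [[wfT _ acyc] _ leaf] wa; have [_ _ wa'] := tadj_endpoints irr_e wfT wa.
have wa_path : path (tadj T) w [:: a] by rewrite /= wa.
have wa_uniq : uniq [:: w; a] by rewrite /= inE wa'.
have [q [pth uq maxq]] := exists_maximal_path wa_path wa_uniq.
rewrite cat1s in pth uq maxq.
have dz := maximal_path_last_deg1 irr_e wfT acyc pth uq maxq isT.
move: uq => /andP [wq _]; exists (last a q); first rewrite !inE andbC.
- apply/andP; split; last by apply: contraNneq wq => <-; apply: mem_last.
  have zT : last a q \in sV T by apply: (deg_gt0_sV irr_e wfT); rewrite dz.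
  exact: leaf zT dz.
- by apply/connectP; exists q => //; apply: avoid_path; case/andP: pth.
Qed.

Lemma steiner_separated_leaves w :
  1 < deg T w ->
  exists z1 z2, [/\ z1 \in S :\ w, z2 \in S :\ w & ~~ connect (avoid_adj T w) z1 z2].
Proof.
have [[wfT _ acyc] _ _] := stT.
case/(deg_gt1P irr_e wfT) => a [b [wa wb ab]].
have [z1 z1S az1] := steiner_leaf_beyond wa.
have [z2 z2S bz2] := steiner_leaf_beyond wb.
exists z1, z2; split=> //; apply/negP => z12.
have avoid_conn_sym := sym_connect_sym (avoid_adj_sym T w).
have: connect (avoid_adj T w) a b.
  by rewrite (connect_trans az1 (connect_trans z12 _)) // avoid_conn_sym.
case/connectP => p pab Eb; move: Eb; case/shortenP: pab => q pq uq _ Eb.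
have [_ _ wa'] := tadj_endpoints irr_e wfT wa.
have: size (a :: q) <= 1.
  apply: (acyclic_closed_path irr_e wfT (u := w) acyc).
  - by apply/andP; split=> //; apply: sub_path pq => x y /and3P [].
  - by apply/andP; split=> //; rewrite in_cons negb_or wa' (avoid_path_notin pq).
  - by rewrite tadj_sym /= -Eb.
by case: q {pq uq} Eb => [/= Eb|//]; rewrite Eb eqxx in ab.
Qed.

Lemma steiner_vertex_deg_gt0 w : 2 <= #|S| -> w \in sV T -> 0 < deg T w.
Proof.
case: stT => [[wfT connT _] ST _] /card_gt1P [y1 [y2 [y1S y2S y12]]] wT.
have [y yS yw] : exists2 y, y \in S & y != w.
  by case: (eqVneq y1 w) => [E|]; [exists y2 => //; rewrite -E eq_sym | exists y1].
have [[|u p] [_ _ pth Ey _]] := connT w y wT (subsetP ST y yS).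
  by rewrite -Ey eqxx in yw.
by apply/(deg_gt0P wfT); exists u; case/andP: pth.
Qed.

Lemma steiner_nonterminal_deg_gt1 w :
  2 <= #|S| -> w \in sV T -> w \notin S -> 1 < deg T w.
Proof.
case: (stT) => _ _ leaf S2 wT wS.
rewrite ltn_neqAle steiner_vertex_deg_gt0 // andbT.
by apply: contra wS => /eqP d1; apply: leaf wT (esym d1).
Qed.

End SteinerTree.

Section IndependentTrees.
Variables (V : finType) (e : rel V) (S : {set V}) (k : nat) (Ts : 'I_k -> subgraph V).
Hypotheses (irr_e : irreflexive e) (st : forall i, steiner_tree e S (Ts i)).

Lemma CISST_branching_unique (w : V) (p q : 'I_k) :
  CISST S Ts -> p < q -> 1 < deg (Ts p) w -> 1 < deg (Ts q) w -> False.
Proof.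
move=> indep pq dp dq; have [_ _ IN] := indep p q pq.
have [[_ connp _] Sp _] := st p; have [[_ connq _] Sq _] := st q.
have [y1 [y2 [y1S y2S ny]]] := steiner_separated_leaves irr_e (st p) dp.
have [z1 [z2 [z1S z2S nz]]] := steiner_separated_leaves irr_e (st q) dq.
have [x [x' []]] := common_separated_pair
  (sym_connect_sym (avoid_adj_sym (Ts p) w)) (@connect_trans _ _)
  (sym_connect_sym (avoid_adj_sym (Ts q) w)) (@connect_trans _ _)
  y1S y2S z1S z2S ny nz.
rewrite !inE => /andP [xw xS] /andP [x'w x'S] sepp sepq.
have [P xP] := connp x x' (subsetP Sp x xS) (subsetP Sp x' x'S).
have [Q xQ] := connq x x' (subsetP Sq x xS) (subsetP Sq x' x'S).
have wx : w != x by rewrite eq_sym.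
have wx' : w != x' by rewrite eq_sym.
have := IN x x' xS x'S P Q xP xQ w (internal_of_separated xP wx wx' sepp).
by rewrite (internal_of_separated xQ wx wx' sepq).
Qed.

Lemma branching_unique_CISST :
  2 <= #|S| -> (forall p q : 'I_k, p < q -> sE (Ts p) :&: sE (Ts q) = set0) ->
  (forall w, #|[set i | 1 < deg (Ts i) w]| <= 1) -> CISST S Ts.
Proof.
move=> S2 disjE branch p q pq.
have {}branch w : 1 < deg (Ts p) w -> 1 < deg (Ts q) w -> False.
  move=> dp dq; have := card_le1_eqP (branch w) p q; rewrite !inE => /(_ dp dq) Eqp.
  by rewrite Eqp ltnn in pq.
split; first exact: disjE.
- apply/setP => v; rewrite inE; apply/andP/idP => [[vp vq]|vS].
  + apply/negPn/negP => vS; apply: (branch v); exact: steiner_nonterminal_deg_gt1.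
  + by have [[_ Sp _] [_ Sq _]] := (st p, st q); rewrite (subsetP Sp) ?(subsetP Sq).
- have wf i : wf_subgraph e (Ts i) by case: (st i) => [[]].
  move=> x1 x2 _ _ P Q xP xQ v vP; apply/negP => vQ; apply: (branch v).
  + exact: (internal_deg_gt1 irr_e (wf p) xP vP).
  + exact: (internal_deg_gt1 irr_e (wf q) xQ vQ).
Qed.

End IndependentTrees.

Unset Implicit Arguments.

Theorem theorem2p1 (V : finType) (e : rel V) (S : {set V}) (k : nat)
    (Ts : 'I_k -> subgraph V) :
  simple_graph e -> graph_connected e -> 2 <= #|S| -> 2 <= k ->
  (forall i, steiner_tree e S (Ts i)) ->
  (CISST S Ts <->
   ((forall p q : 'I_k, p < q -> sE (Ts p) :&: sE (Ts q) = set0) /\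
    (forall w : V, #|[set i : 'I_k | 1 < deg (Ts i) w]| <= 1))).
Proof.
move=> [_ irr] _ S2 _ st; split=> [indep|[disjE branch]].
- split=> [p q /indep [] //|w]; apply/card_le1_eqP => i j; rewrite !inE => di dj.
  case: (ltngtP i j) => [ij|ji|/val_inj //]; exfalso.
  + exact: CISST_branching_unique irr st w i j indep ij di dj.
  + exact: CISST_branching_unique irr st w j i indep ji dj di.
- exact: branching_unique_CISST.
Qed.
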